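(* Let $p+q=p'+q'=n\ge3$. If there is an isomorphism $\mathbb{O}_{p,q}\to\mathbb{O}_{p',q'}$ preserving the structure of $\mathbb{Z}_2^n$-graded algebra, then $s(p,q)=s(p',q')$.
   Context: $\mathbb{Z}_2=\{0,1\}$. For $p+q=n\ge3$, $\mathbb{O}_{p,q}$ is the real algebra with basis $\{u_x: x\in\mathbb{Z}_2^n\}$ and product $u_x\cdot u_y=(-1)^{f(x,y)}u_{x+y}$, where $f(x,y)=\sum_{1\le i<j<k\le n}(x_ix_jy_k+x_iy_jx_k+y_ix_jx_k)+\sum_{1\le i\le j\le n}x_iy_j+\sum_{1\le i\le p}x_iy_i$. Let $\alpha_{p,q}(x)=f(x,x)$ (so $u_x^2=(-1)^{\alpha_{p,q}(x)}u_0$), and define the statistics $s(p,q)=\#\{x\in\mathbb{Z}_2^n:\alpha_{p,q}(x)=1\}$. An isomorphism preserving the graded structure is an algebra isomorphism sending each homogeneous element (scalar multiple of some $u_x$) to a homogeneous element. *)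

From HB Require Import structures.
From mathcomp Require Import all_boot all_order all_algebra.
From mathcomp Require Import reals.
Set Implicit Arguments. Unset Strict Implicit. Unset Printing Implicit Defensive.
Import Order.TTheory GRing.Theory Num.Theory.
Local Open Scope ring_scope.

(* Z_2^n, as boolean vectors indexed by 'I_n (index i : 'I_n stands for i+1). *)
Notation Z2n n := {ffun 'I_n -> bool}.

Definition z2add n (x y : Z2n n) : Z2n n := [ffun i => x i (+) y i].

(* The twisting function f(x,y) of O_{p,q}, computed in Z_2 (true = 1).
   Indices 1 <= i <= n are shifted to 0 <= i < n, so "i <= p" becomes "i < p". *)
Definition ftwist n (p : nat) (x y : Z2n n) : bool :=
  odd (\sum_(i < n) \sum_(j < n) \sum_(k < n)
         (((i < j) && (j < k)) *
          ((x i && x j && y k) + (x i && y j && x k) + (y i && x j && x k)))%N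
       + \sum_(i < n) \sum_(j < n) ((i <= j) && x i && y j)
       + \sum_(i < n) ((i < p) && x i && y i))%N.

Definition alpha n p (x : Z2n n) : bool := ftwist p x x.

(* s(p,q) = #{x in Z_2^n : alpha_{p,q}(x) = 1}, with n = p + q. *)
Definition sstat n p : nat := #|[set x : Z2n n | alpha p x]|.

(* The underlying real vector space of O_{p,q}: coordinates w.r.t. the basis u_x. *)
Notation Oalg R n := {ffun Z2n n -> R}.

Definition ubasis (R : realType) n (x : Z2n n) : Oalg R n :=
  [ffun y => if y == x then 1 else 0].

(* product of O_{p,q}: u_x . u_y = (-1)^{f(x,y)} u_{x+y}, extended bilinearly *)
Definition mulO (R : realType) n (p : nat) (a b : Oalg R n) : Oalg R n :=
  [ffun z => \sum_(x : Z2n n) \sum_(y : Z2n n | z2add x y == z)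
               (-1) ^+ ftwist p x y * a x * b y].

Definition scaleO (R : realType) n (c : R) (a : Oalg R n) : Oalg R n :=
  [ffun y => c * a y].

Definition homogeneous (R : realType) n (a : Oalg R n) : Prop :=
  exists (c : R) (x : Z2n n), a = scaleO c (ubasis R x).

Definition graded_iso (R : realType) n (p p' : nat) (phi : Oalg R n -> Oalg R n) : Prop :=
  [/\ forall (c : R) (a b : Oalg R n), phi (scaleO c a + b) = scaleO c (phi a) + phi b,
      bijective phi,
      forall a b : Oalg R n, phi (mulO p a b) = mulO p' (phi a) (phi b)
    & forall a : Oalg R n, homogeneous a -> homogeneous (phi a)].

(* A graded isomorphism sends each basis vector u_x to c_x u_(s x) with c_x <> 0, and s is
   injective by linear independence. Applying it to u_x^2 = (-1)^alpha(x) u_0 forces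
   s 0 = 0 and (-1)^alpha(x) c_0 = (-1)^alpha'(s x) c_x^2; at x = 0 this gives c_0 = 1, so
   the signs agree because c_x^2 > 0. Hence s is a bijection of Z_2^n carrying the set
   counted by s(p,q) onto the one counted by s(p',q'). *)
From mathcomp Require Import all_boot all_order all_algebra.
From mathcomp Require Import reals.
Import Order.TTheory GRing.Theory Num.Theory.
Local Open Scope ring_scope.

Definition z2zero n : Z2n n := [ffun _ => false].

Lemma z2addxx n (x : Z2n n) : z2add x x = z2zero n.
Proof. by apply/ffunP => i; rewrite !ffunE addbb. Qed.

Lemma alpha_zero n p : alpha p (z2zero n) = false.
Proof.
have zeroE i : z2zero n i = false by rewrite ffunE.
rewrite /alpha /ftwist big1 => [|i _]; last first.
  by rewrite big1 // => j _; rewrite big1 // => k _; rewrite !zeroE !andbF muln0.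
rewrite big1 => [|i _]; last by rewrite big1 // => j _; rewrite !zeroE andbF.
by rewrite big1 // => i _; rewrite zeroE andbF.
Qed.

Lemma signr_eq_mulsqr (R : realDomainType) (a b : bool) (c : R) :
  c != 0 -> (-1) ^+ a = (-1) ^+ b * (c * c) -> a = b.
Proof.
move=> c_neq0; have : 0 < c * c by rewrite -expr2 exprn_even_gt0.
case: a; case: b; rewrite ?expr0 ?expr1 ?mul1r ?mulN1r //= => + e.
  by rewrite -e ltr0N1.
by rewrite -[c * c]opprK -e ltr0N1.
Qed.

Section HomogeneousArithmetic.

Context {R : realType} {n : nat}.

Lemma scaleO_ubasisE c (x z : Z2n n) :
  scaleO c (ubasis R x) z = if z == x then c else 0.
Proof. by rewrite !ffunE; case: eqP; rewrite ?mulr1 ?mulr0. Qed.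

Lemma scale1O (a : Oalg R n) : scaleO 1 a = a.
Proof. by apply/ffunP => z; rewrite ffunE mul1r. Qed.

Lemma scaleOA c d (a : Oalg R n) : scaleO c (scaleO d a) = scaleO (c * d) a.
Proof. by apply/ffunP => z; rewrite !ffunE mulrA. Qed.

Lemma scaleO_ubasis_inj {c d} {x y : Z2n n} :
  c != 0 -> scaleO c (ubasis R x) = scaleO d (ubasis R y) -> x = y /\ c = d.
Proof.
move=> c_neq0 /ffunP /(_ x); rewrite !scaleO_ubasisE eqxx.
by case: eqP => [-> | _] // c0; rewrite c0 eqxx in c_neq0.
Qed.

Lemma mulO_scale_ubasis p c d (x y : Z2n n) :
  mulO p (scaleO c (ubasis R x)) (scaleO d (ubasis R y)) =
  scaleO ((-1) ^+ ftwist p x y * c * d) (ubasis R (z2add x y)).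
Proof.
apply/ffunP => z; rewrite scaleO_ubasisE ffunE (bigD1 x) //=.
rewrite [X in _ + X]big1 ?addr0 => [|x' x'x]; last first.
  by apply: big1 => y' _; rewrite scaleO_ubasisE (negbTE x'x) mulr0 mul0r.
rewrite big_mkcond (bigD1 y) //= [X in _ + X]big1 ?addr0 => [|y' y'y]; last first.
  by case: ifP => // _; rewrite [X in _ * X]scaleO_ubasisE (negbTE y'y) mulr0.
by rewrite !scaleO_ubasisE !eqxx eq_sym.
Qed.

Lemma mulO_ubasis_diag p (x : Z2n n) :
  mulO p (ubasis R x) (ubasis R x) =
  scaleO ((-1) ^+ alpha p x) (ubasis R (z2zero n)).
Proof. by rewrite -[ubasis R x]scale1O mulO_scale_ubasis z2addxx !mulr1. Qed.

End HomogeneousArithmetic.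

Section GradedIsomorphism.

Context {R : realType} {n p p' : nat} {phi : Oalg R n -> Oalg R n}.
Hypothesis phi_iso : graded_iso p p' phi.

Lemma graded_iso0 : phi 0 = 0.
Proof.
case: phi_iso => lin _ _ _; have := lin 1 0 0.
by rewrite !scale1O addr0 => /esym/(canRL (addrK _)); rewrite subrr.
Qed.

Lemma graded_isoZ c a : phi (scaleO c a) = scaleO c (phi a).
Proof. by case: phi_iso => lin _ _ _; rewrite -[scaleO c a]addr0 lin graded_iso0 addr0. Qed.

Lemma graded_iso_ubasis : exists (c : Z2n n -> R) (s : Z2n n -> Z2n n),
  forall x, phi (ubasis R x) = scaleO (c x) (ubasis R (s x)).
Proof.
case: phi_iso => _ _ _ hom.
have ex x : exists cy : R * Z2n n, phi (ubasis R x) == scaleO cy.1 (ubasis R cy.2).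
  by have [|c [y ->]] := hom (ubasis R x); [exists 1, x; rewrite scale1O | exists (c, y)].
by exists (fun x => (xchoose (ex x)).1), (fun x => (xchoose (ex x)).2) => x;
  apply/eqP; exact: (xchooseP (ex x)).
Qed.

Context {c : Z2n n -> R} {s : Z2n n -> Z2n n}.
Hypothesis phi_ubasis : forall x, phi (ubasis R x) = scaleO (c x) (ubasis R (s x)).

Lemma graded_iso_coef_neq0 x : c x != 0.
Proof.
case: phi_iso => _ /bij_inj phi_inj _ _; apply/eqP => c0.
have /phi_inj/ffunP/(_ x) : phi (ubasis R x) = phi 0.
  by rewrite graded_iso0 phi_ubasis c0; apply/ffunP => z; rewrite !ffunE mul0r.
by rewrite !ffunE eqxx => /eqP; rewrite oner_eq0.
Qed.

Lemma graded_iso_index_inj : injective s.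
Proof.
case: phi_iso => lin /bij_inj phi_inj _ _ x y sxy; apply/eqP/negPn/negP => xy.
have : phi (scaleO (c y) (ubasis R x) + scaleO (- c x) (ubasis R y)) = phi 0.
  rewrite lin graded_iso0 graded_isoZ !phi_ubasis sxy; apply/ffunP => z.
  by rewrite !ffunE mulNr !mulrA (mulrC (c y)) addrN.
move/phi_inj/ffunP/(_ x); rewrite !ffunE eqxx (negbTE xy) mulr0 mulr1 addr0.
by move/eqP; rewrite (negbTE (graded_iso_coef_neq0 y)).
Qed.

Lemma graded_iso_square x :
  s (z2zero n) = z2zero n /\
  (-1) ^+ alpha p x * c (z2zero n) = (-1) ^+ alpha p' (s x) * c x * c x.
Proof.
case: phi_iso => _ _ mul _; have := mul (ubasis R x) (ubasis R x).
rewrite mulO_ubasis_diag graded_isoZ !phi_ubasis mulO_scale_ubasis z2addxx scaleOA.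
move=> e; have [|s0 coef] := scaleO_ubasis_inj _ (esym e).
  by rewrite !mulf_neq0 ?signr_eq0 ?graded_iso_coef_neq0.
by split=> //; rewrite -coef.
Qed.

Lemma graded_iso_coef_zero : c (z2zero n) = 1.
Proof.
have [s0] := graded_iso_square (z2zero n).
rewrite s0 !alpha_zero !mul1r => c0E.
by apply: (mulfI (graded_iso_coef_neq0 (z2zero n))); rewrite mulr1 -c0E.
Qed.

Lemma graded_iso_alpha x : alpha p x = alpha p' (s x).
Proof.
have [_] := graded_iso_square x; rewrite graded_iso_coef_zero mulr1 -mulrA.
exact/signr_eq_mulsqr/graded_iso_coef_neq0.
Qed.

End GradedIsomorphism.

Theorem mainTheorem10 (R : realType) (n p q p' q' : nat) :
  (3 <= n)%N -> (p + q)%N = n -> (p' + q')%N = n ->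
  (exists phi : Oalg R n -> Oalg R n, graded_iso p p' phi) ->
  sstat n p = sstat n p'.
Proof.
(* Neither n >= 3 nor the values of q, q' play any role. *)
move=> _ _ _ [phi phi_iso].
have [c [s phi_ubasis]] := graded_iso_ubasis phi_iso.
rewrite /sstat -[in RHS](card_preimset _ (graded_iso_index_inj phi_iso phi_ubasis)).
by apply: eq_card => x; rewrite !inE (graded_iso_alpha phi_iso phi_ubasis).
Qed.
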